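(* Let $\beta>0$ and let $\{M(N)\}_{N\ge1}$ be a sequence of positive integers. If the family $\{Z^{f,\beta,h_c^a(\beta)}_{N,M(N),\omega}\}_{N\ge1}$ is uniformly integrable under $\mathbb P$, then there exists $\zeta>0$ such that for every sequence of events $\{A_N\}_{N\ge1}$ (events for $\tau$) with $\lim_{N\to\infty}\mathbf P(A_N)=0$ there is $N_0\in\mathbb N$ such that $$\inf_{N\ge N_0}\mathbb P\Big(\mathbf P^{f,\beta,h_c^a(\beta)}_{N,M(N),\omega}(A_N)\le\tfrac12\ \text{ and }\ Z^{f,\beta,h_c^a(\beta)}_{N,M(N),\omega}>\tfrac12\Big)\ge\zeta.$$
   Context: Let $\mathbb N=\{1,2,\dots\}$. Fix $\alpha\ge0$ and a slowly varying function $L$, and set $K(n)=L(n)n^{-(2+\alpha)}$, normalized so that $\sum_{n,m\in\mathbb N}K(n+m)=1$. Let $\tau$ be a bivariate renewal process with law $\mathbf P$: $\tau_0=(0,0)$, i.i.d. increments with $\mathbf P(\tau_1=(n,m))=K(n+m)$, $n,m\in\mathbb N$; $\tau$ is identified with the random set of its points. Let $\omega=\{\omega_{n,m}\}$ be i.i.d. real random variables with law $\mathbb P$, centered, unit variance, $Q(\beta)=\mathbb E[e^{\beta\omega_{1,1}}]<\infty$ for all $\beta$; set $h_c^a(\beta)=-\log Q(\beta)$. The free partition function is $Z^{f,\beta,h}_{N,M,\omega}=\mathbf E[\exp(\sum_{n=1}^N\sum_{m=1}^M(\beta\omega_{n,m}+h)\mathbf 1_{(n,m)\in\tau})]$, and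 $\mathbf P^{f,\beta,h}_{N,M,\omega}$ is the probability measure on $\tau$ with density $\exp(\sum_{n=1}^N\sum_{m=1}^M(\beta\omega_{n,m}+h)\mathbf 1_{(n,m)\in\tau})/Z^{f,\beta,h}_{N,M,\omega}$ with respect to $\mathbf P$. *)

From HB Require Import structures.
From mathcomp Require Import all_boot all_order all_algebra.
From mathcomp Require Import all_classical all_reals all_analysis.
Set Implicit Arguments. Unset Strict Implicit. Unset Printing Implicit Defensive.
Import Order.TTheory GRing.Theory Num.Theory.
Import numFieldNormedType.Exports.
Local Open Scope classical_set_scope.
Local Open Scope ring_scope.

Section Defs.
Variable R : realType.

Definition pos2 (i : nat * nat) : bool := (0 < i.1)%N && (0 < i.2)%N.

Definition slowly_varying (L : R -> R) : Prop :=
  (forall x, 0 < x -> 0 < L x) /\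
  (forall c, 0 < c -> (fun x => L (c * x) / L x) @ +oo --> (1 : R)).

Definition Kfun (L : R -> R) (alpha : R) (n : nat) : R :=
  L n%:R * (n%:R) `^ (- (2 + alpha)).

Definition energy (om : nat -> nat -> R) (beta h : R) (N M : nat)
  (S : set (nat * nat)) : R :=
  \sum_(1 <= n < N.+1) \sum_(1 <= m < M.+1)
     (beta * om n m + h) * \1_S (n, m).

Section Renewal.
Context {d : measure_display} {T : measurableType d} (Ptau : probability T R).
Variable xi : nat -> T -> nat * nat.   (* i.i.d. increments of tau *)

Definition renewal_point (k : nat) (t : T) : nat * nat :=
  ((\sum_(i < k) (xi i t).1)%N, (\sum_(i < k) (xi i t).2)%N).

(** tau identified with the random set of its points *)
Definition renewal_set (t : T) : set (nat * nat) :=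
  range (fun k => renewal_point k t).

Definition Zfree (om : nat -> nat -> R) (beta h : R) (N M : nat) : R :=
  fine (\int[Ptau]_t (expR (energy om beta h N M (renewal_set t)))%:E).

Definition Pfree (om : nat -> nat -> R) (beta h : R) (N M : nat)
  (A : set (set (nat * nat))) : R :=
  fine (\int[Ptau]_(t in renewal_set @^-1` A)
          (expR (energy om beta h N M (renewal_set t)))%:E)
  / Zfree om beta h N M.
End Renewal.

Section Disorder.
Context {d : measure_display} {Om : measurableType d} (P : probability Om R).

Definition Qmgf (om : nat -> nat -> Om -> R) (beta : R) : R :=
  fine (\int[P]_w (expR (beta * om 1%N 1%N w))%:E).

Definition hca (om : nat -> nat -> Om -> R) (beta : R) : R :=
  - ln (Qmgf om beta).

Definition unif_integrable (X : nat -> Om -> R) : Prop :=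
  forall e : R, 0 < e -> exists c : R, forall N, (0 < N)%N ->
    let E := [set w | c < `|X N w| ] in
    (\int[P]_(w in E) (`|X N w|)%:E <= e%:E)%E.
End Disorder.

End Defs.

(* Split the renewal according to its trace S on the box [1,N] x [1,M]: the free
   partition function is the mixture  Z_N = sum_S Ptau(tau meets the box in S) W_S
   with W_S = prod_(p in S) exp(beta omega_p + h).  At h = h_c^a(beta) every W_S has
   mean one, because the omega_p are independent and exp(beta omega + h) has mean
   one; hence E Z_N = 1 and, restricting tau to an event A_N, E[Z_N P_N(A_N)] =
   Ptau(A_N).  Uniform integrability yields c with E[Z_N; Z_N > c] <= 1/4, so
   P(Z_N > 1/2) >= 1/(4c) for all N, while Markov's inequality gives
   P(Z_N P_N(A_N) >= 1/4) <= 4 Ptau(A_N) -> 0; on the first event minus the second,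
   P_N(A_N) <= 1/2 < Z_N.  The product rule E prod g(omega_p) = prod E g(omega_p)
   is proved for simple g by expanding one factor at a time and extended to
   measurable g >= 0 by monotone convergence. *)

From HB Require Import structures.
From mathcomp Require Import all_boot all_order all_algebra.
From mathcomp Require Import all_classical all_reals all_analysis measurable_realfun.
From mathcomp Require Import ring lra.
Import Order.TTheory GRing.Theory Num.Theory.
Import numFieldNormedType.Exports.
Local Open Scope classical_set_scope.
Local Open Scope ring_scope.

Lemma ge0_integral_sumZl {R : realType} {d : measure_display} {T : measurableType d}
    (mu : {measure set T -> \bar R}) (D : set T) (J : Type) (r : seq J)
    (a : J -> R) (f : J -> T -> R) :
  measurable D -> (forall j, 0 <= a j) -> (forall j, measurable_fun D (f j)) ->
  (forall j x, D x -> 0 <= f j x) ->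
  (\int[mu]_(x in D) (\sum_(j <- r) a j * f j x)%:E =
   \sum_(j <- r) (a j)%:E * \int[mu]_(x in D) (f j x)%:E)%E.
Proof.
move=> mD a0 mf f0; under eq_integral do rewrite -sumEFin.
rewrite ge0_integral_sum //; last 2 first.
- by move=> j; apply/measurable_EFinP; apply: measurable_funM => //; exact: measurable_cst.
- by move=> j x Dx; rewrite lee_fin mulr_ge0 ?f0.
apply: eq_bigr => j _; under eq_integral do rewrite EFinM.
rewrite ge0_integralZl ?lee_fin //; first exact/measurable_EFinP.
by move=> x Dx; rewrite lee_fin f0.
Qed.

Section independent_product.
Context {R : realType} {d : measure_display} {Om : measurableType d}.
Variable P : probability Om R.
Context {I : choiceType} (D : pred I) (X : I -> Om -> R).
Hypothesis mX : forall i, measurable_fun setT (X i).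
Hypothesis indepX : forall (s : seq I) (B : I -> set R),
  uniq s -> all D s -> (forall i, measurable (B i)) ->
  P (\bigcap_(i in [set` s]) X i @^-1` B i) = (\prod_(i <- s) P (X i @^-1` B i))%E.

Lemma measurable_preimage i B : measurable B -> measurable (X i @^-1` B).
Proof. by move=> mB; rewrite -(setTI (_ @^-1` _)); apply: mX. Qed.

Definition cylinder (s : seq I) (B : I -> set R) := \bigcap_(i in [set` s]) X i @^-1` B i.

Lemma measurable_cylinder s B : (forall i, measurable (B i)) -> measurable (cylinder s B).
Proof.
move=> mB; rewrite /cylinder bigcap_seq; apply: bigsetI_measurable => i _.
exact: measurable_preimage.
Qed.

Lemma cylinder_cons i t B A : i \notin t ->
  cylinder (i :: t) (fun j => if j == i then A else B j) = X i @^-1` A `&` cylinder t B.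
Proof.
move=> it; apply/seteqP; split => w /=.
  move=> Hw; split; first by have := Hw i; rewrite eqxx; apply; rewrite /= mem_head.
  move=> j jt; have := Hw j; rewrite ifN; first by apply; rewrite /= in_cons jt orbT.
  by apply: contraNneq it => <-.
move=> [Aw Bw] j /=; rewrite in_cons => /orP[/eqP ->|jt]; first by rewrite eqxx.
by rewrite ifN; [exact: Bw | apply: contraNneq it => <-].
Qed.

Lemma prob_cylinder_cons i t B A : uniq (i :: t) -> all D (i :: t) ->
  measurable A -> (forall j, measurable (B j)) ->
  P (X i @^-1` A `&` cylinder t B) = (P (X i @^-1` A) * P (cylinder t B))%E.
Proof.
move=> /= /andP[it ut] /andP[Di Dt] mA mB.
rewrite -cylinder_cons // /cylinder indepX /= ?it ?Di //; last first.
  by move=> j; case: ifP.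
rewrite big_cons eqxx indepX //; congr (_ * _)%E.
by apply: eq_big_seq => j jt; rewrite ifN //; apply: contraNneq it => <-.
Qed.

Section indicator_combination.
Variables (K : nat) (c : nat -> R) (A : nat -> set R).
Hypotheses (c_ge0 : forall k, 0 <= c k) (mA : forall k, measurable (A k)).

Definition indic_comb (x : R) : R := \sum_(k < K) c k * \1_(A k) x.

Lemma measurable_indic_comb : measurable_fun setT indic_comb.
Proof.
apply: measurable_sum => k; apply: measurable_funM; first exact: measurable_cst.
exact: measurable_indic.
Qed.

Lemma indic_comb_ge0 x : 0 <= indic_comb x.
Proof. by apply: sumr_ge0 => k _; rewrite mulr_ge0 // indicE ler0n. Qed.

(* The cylinder factor makes the statement inductive: expanding the first factor
   of the product adds one coordinate to the cylinder. *)
Lemma integral_cylinder_prod_indic_comb s t B :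
  uniq (s ++ t) -> all D (s ++ t) -> (forall j, measurable (B j)) ->
  (\int[P]_w (\1_(cylinder t B) w * \prod_(i <- s) indic_comb (X i w))%:E =
   (fine (P (cylinder t B)) *
    \prod_(i <- s) \sum_(k < K) c k * fine (P (X i @^-1` A k)))%:E)%E.
Proof.
elim: s t B => [|i s IH] t B ust Dst mB.
  under eq_integral do rewrite big_nil mulr1.
  rewrite big_nil mulr1 integral_indic ?setIT ?fineK //; last exact: measurable_cylinder.
  by rewrite fin_num_measure //; exact: measurable_cylinder.
have ust' : uniq (s ++ i :: t) by rewrite -(perm_uniq (introT permPl (perm_catCA [:: i] s t))).
have Dst' : all D (s ++ i :: t) by rewrite -(perm_all _ (introT permPl (perm_catCA [:: i] s t))).
have uit : uniq (i :: t) by move: ust'; rewrite cat_uniq => /and3P[].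
have Dit : all D (i :: t) by move: Dst'; rewrite all_cat => /andP[].
have it : i \notin t by case/andP: uit.
pose Bk k j := if j == i then A k else B j.
have mBk k j : measurable (Bk k j) by rewrite /Bk; case: ifP.
have expand w : \1_(cylinder t B) w * \prod_(j <- i :: s) indic_comb (X j w) =
    \sum_(k < K) c k * (\1_(cylinder (i :: t) (Bk k)) w *
                         \prod_(j <- s) indic_comb (X j w)).
  rewrite big_cons /indic_comb big_distrl big_distrr; apply: eq_bigr => k _ /=.
  rewrite cylinder_cons // indicI /=.
  change (\1_(X i @^-1` A k) w) with (\1_(A k) (X i w) : R).
  by rewrite mulrCA !mulrA.
under eq_integral do rewrite expand.
rewrite ge0_integral_sumZl //; last 2 first.
- move=> k; apply: measurable_funM.
    by apply: measurable_indic; exact: measurable_cylinder.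
  by apply: measurable_prod => j _; exact: measurableT_comp measurable_indic_comb (mX j).
- move=> k w _; rewrite mulr_ge0 ?indicE ?ler0n //.
  by apply: prodr_ge0 => j _; exact: indic_comb_ge0.
pose rest := \prod_(j <- s) \sum_(k < K) c k * fine (P (X j @^-1` A k)).
rewrite (eq_bigr (fun k : 'I_K =>
  (c k * (fine (P (X i @^-1` A k)) * fine (P (cylinder t B)) * rest))%:E)); last first.
  move=> k _; have := IH (i :: t) (Bk k) ust' Dst' (mBk k).
  move=> ->; rewrite cylinder_cons // prob_cylinder_cons // -EFinM fineM //.
    exact/fin_num_measure/measurable_preimage.
  exact/fin_num_measure/measurable_cylinder.
rewrite sumEFin big_cons; congr (_%:E).
rewrite mulrCA big_distrl /=; apply: eq_bigr => k _; rewrite /rest; ring.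
Qed.

Lemma integral_prod_indic_comb s : uniq s -> all D s ->
  (\int[P]_w (\prod_(i <- s) indic_comb (X i w))%:E =
   (\prod_(i <- s) \sum_(k < K) c k * fine (P (X i @^-1` A k)))%:E)%E.
Proof.
move=> us Ds; have := @integral_cylinder_prod_indic_comb s [::] (fun=> setT).
rewrite cats0 => /(_ us Ds (fun=> measurableT)).
have -> : cylinder [::] (fun=> setT) = setT by apply/seteqP; split.
rewrite probability_setT mul1r => <-.
by apply: eq_integral => w _; rewrite indicT mul1r.
Qed.

End indicator_combination.

Section nonneg_function.
Variable g : R -> R.
Hypotheses (mg : measurable_fun setT g) (g_ge0 : forall x, 0 <= g x).

Let approx_g := approx setT (EFin \o g).

Let coef n k : R := if (k < n * 2 ^ n)%N then k%:R * 2 ^- n else n%:R.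

Let level n k := if (k < n * 2 ^ n)%N then dyadic_approx setT (EFin \o g) n k
  else integer_approx setT (EFin \o g) n.

Let coef_ge0 n k : 0 <= coef n k.
Proof. by rewrite /coef; case: ifP. Qed.

Let measurable_level n k : measurable (level n k).
Proof.
rewrite /level /dyadic_approx; case: ifP => kn; last first.
  by apply: emeasurable_fun_c_infty => //; exact/measurable_EFinP.
rewrite kn setTI; have -> : [set x | (EFin \o g) x \in EFin @` [set` dyadic_itv R n k]] =
    g @^-1` [set` dyadic_itv R n k].
  apply/seteqP; split => x /=; rewrite inE /=; first by case=> y ? [<-].
  by exists (g x).
by rewrite -(setTI (_ @^-1` _)); exact: mg (measurable_itv _).
Qed.

Let approx_gE n x : approx_g n x = indic_comb (n * 2 ^ n).+1 (coef n) (level n) x.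
Proof.
rewrite /indic_comb big_ord_recr /= /coef /level ltnn; congr (_ + _).
by apply: eq_bigr => k _; rewrite ltn_ord.
Qed.

Let integral_prod_approx s n : uniq s -> all D s ->
  (\int[P]_w (\prod_(i <- s) approx_g n (X i w))%:E =
   (\prod_(i <- s) \sum_(k < (n * 2 ^ n).+1)
      coef n k * fine (P (X i @^-1` level n k)))%:E)%E.
Proof.
by move=> us Ds; under eq_integral do under eq_bigr do rewrite approx_gE;
  exact: integral_prod_indic_comb.
Qed.

Let cvg_integral_prod_approx s :
  (\int[P]_w (\prod_(i <- s) approx_g n (X i w))%:E)%E @[n --> \oo] -->
  (\int[P]_w (\prod_(i <- s) g (X i w))%:E)%E.
Proof.
have approx_ge0 n x : 0 <= approx_g n x.
  by rewrite approx_gE; exact: indic_comb_ge0.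
have map n : measurable_fun setT (approx_g n).
  by rewrite (funext (approx_gE n)); exact: measurable_indic_comb.
have -> : (\int[P]_w (\prod_(i <- s) g (X i w))%:E =
    \int[P]_w limn (fun n => (\prod_(i <- s) approx_g n (X i w))%:E))%E.
  apply: eq_integral => w _; apply/esym/cvg_lim => //; apply: cvg_EFin; first exact: nearW.
  rewrite /comp /=; apply: (@cvg_big R I *%R 1 predT (@mul_continuous R)) => i _.
  by apply: cvg_approx => //= [x _|]; rewrite ?lee_fin ?ltry.
apply: cvg_monotone_convergence => //.
- move=> n; apply/measurable_EFinP; apply: measurable_prod => i _.
  exact: measurableT_comp (map n) (mX i).
- by move=> n w _; rewrite lee_fin; apply: prodr_ge0 => i _.
- move=> w _ n k nk; rewrite lee_fin; apply: ler_prod => i _.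
  by rewrite approx_ge0 /=; apply/lefP/nd_approx.
Qed.

Lemma integral_prod_indep s (l : I -> R) : uniq s -> all D s ->
  (forall i, i \in s -> \int[P]_w (g (X i w))%:E = (l i)%:E)%E ->
  (\int[P]_w (\prod_(i <- s) g (X i w))%:E = (\prod_(i <- s) l i)%:E)%E.
Proof.
move=> us Ds gl.
pose m i n := \sum_(k < (n * 2 ^ n).+1) coef n k * fine (P (X i @^-1` level n k)).
have m_cvg i : i \in s -> m i n @[n --> \oo] --> l i.
  move=> si; have := cvg_integral_prod_approx [:: i].
  under eq_fun do rewrite integral_prod_approx ?big_seq1 //= ?(allP Ds) ?andbT //.
  by under eq_integral do rewrite big_seq1; rewrite gl // => /fine_cvgP[].
have lim_prod : (\int[P]_w (\prod_(i <- s) approx_g n (X i w))%:E)%E @[n --> \oo] -->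
    (\prod_(i <- s) l i)%:E.
  under eq_fun do rewrite integral_prod_approx //.
  apply: cvg_EFin; first exact: nearW.
  rewrite big_seq; under eq_fun do rewrite big_seq.
  exact: (@cvg_big R I *%R 1 (fun i => i \in s) (@mul_continuous R)).
exact: cvg_unique (cvg_integral_prod_approx s) lim_prod.
Qed.

End nonneg_function.

End independent_product.

Lemma ge0_integral_comp_eq_law {R : realType} {d d' : measure_display}
    {T : measurableType d} {U : measurableType d'}
    (mu : {measure set T -> \bar R}) (Y1 Y2 : T -> U) (g : U -> R) :
  measurable_fun setT Y1 -> measurable_fun setT Y2 ->
  (forall B, measurable B -> mu (Y1 @^-1` B) = mu (Y2 @^-1` B)) ->
  measurable_fun setT g -> (forall x, 0 <= g x) ->
  (\int[mu]_w (g (Y1 w))%:E = \int[mu]_w (g (Y2 w))%:E)%E.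
Proof.
move=> mY1 mY2 law mg g0.
have mEg : measurable_fun setT (EFin \o g) by exact/measurable_EFinP.
have Eg0 : {in setT, forall y, (0 <= (EFin \o g) y)%E} by move=> y _; rewrite lee_fin.
have := ge0_integral_pushforward mY1 mu measurableT mEg Eg0.
have := ge0_integral_pushforward mY2 mu measurableT mEg Eg0.
rewrite !preimage_setT => <- <-.
by apply: eq_measure_integral => B mB _; exact: law.
Qed.

Lemma integral_gt0 {R : realType} {d : measure_display} {T : measurableType d}
    (P : probability T R) (f : T -> R) :
  measurable_fun setT f -> (forall x, 0 < f x) -> (0 < \int[P]_x (f x)%:E)%E.
Proof.
move=> mf f_gt0; rewrite lt0e integral_ge0 ?andbT; last by move=> x _; rewrite lee_fin ltW.
apply/eqP => int0.
have [N [mN PN0 fN]] : ae_eq P setT (EFin \o f) (cst 0%E).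
  apply/ae_eq_integral_abs => //; first exact/measurable_EFinP.
  by under eq_integral do rewrite gee0_abs ?lee_fin ?ltW //.
suff : P setT = 0%E by rewrite probability_setT => /eqP; rewrite eqe oner_eq0.
apply/eqP; rewrite eq_le measure_ge0 andbT -PN0 le_measure ?inE //.
move=> x _; apply: fN => /(_ I) [] /eqP; rewrite gt_eqF //.
Qed.

Section disorder.
Context {R : realType} {d : measure_display} {Om : measurableType d}.
Variables (P : probability Om R) (om : nat -> nat -> Om -> R).
Hypothesis mom : forall n m, measurable_fun setT (om n m).
Hypothesis om_law : forall n m n' m' (B : set R), pos2 (n, m) -> pos2 (n', m') ->
  measurable B -> P (om n m @^-1` B) = P (om n' m' @^-1` B).
Hypothesis om_expR : forall n m b, pos2 (n, m) ->
  P.-integrable setT (fun w => (expR (b * om n m w))%:E).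

Let measurable_expR_om b n m : measurable_fun setT (fun w => expR (b * om n m w)).
Proof.
apply: measurableT_comp; first exact: measurable_expR.
by apply: measurable_funM; [exact: measurable_cst | exact: mom].
Qed.

Let measurable_expR_affine b h : measurable_fun setT (fun x : R => expR (b * x + h)).
Proof.
apply: measurableT_comp; first exact: measurable_expR.
by apply: measurable_funD => //; exact: measurable_funM.
Qed.

Lemma QmgfE b : (\int[P]_w (expR (b * om 1 1 w))%:E)%E = (Qmgf P om b)%:E.
Proof. by rewrite /Qmgf fineK //; apply: integrable_fin_num => //; exact: om_expR. Qed.

Lemma Qmgf_gt0 b : 0 < Qmgf P om b.
Proof.
by rewrite -lte_fin -QmgfE integral_gt0 // => w; exact: expR_gt0.
Qed.

Lemma integral_expR_hca n m b : pos2 (n, m) ->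
  (\int[P]_w (expR (b * om n m w + hca P om b))%:E = 1)%E.
Proof.
move=> nm; rewrite (ge0_integral_comp_eq_law P (om n m) (om 1 1)
  (fun x => expR (b * x + hca P om b))) //.
- under eq_integral do rewrite expRD EFinM.
  rewrite ge0_integralZr ?lee_fin ?expR_ge0 //; last exact/measurable_EFinP.
  rewrite QmgfE -EFinM /hca expRN lnK ?posrE ?Qmgf_gt0 // divff //.
  exact/lt0r_neq0/Qmgf_gt0.
- by move=> B mB; exact: om_law.
Qed.

Hypothesis om_indep : forall (s : seq (nat * nat)) (B : nat * nat -> set R),
  uniq s -> all pos2 s -> (forall i, measurable (B i)) ->
  P (\bigcap_(i in [set` s]) om i.1 i.2 @^-1` B i) =
  (\prod_(i <- s) P (om i.1 i.2 @^-1` B i))%E.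

Lemma integral_prod_expR_hca b (s : seq (nat * nat)) : uniq s -> all pos2 s ->
  (\int[P]_w (\prod_(i <- s) expR (b * om i.1 i.2 w + hca P om b))%:E = 1)%E.
Proof.
move=> us ps.
have := @integral_prod_indep R d Om P _ pos2 (fun i => om i.1 i.2)
  (fun i => mom i.1 i.2) om_indep (fun x => expR (b * x + hca P om b))
  (measurable_expR_affine b _) (fun x => expR_ge0 _) s (fun=> 1) us ps.
rewrite big1 // => -> // [n m] /(allP ps); exact: integral_expR_hca.
Qed.

End disorder.

Lemma integral_finite_valued {R : realType} {d : measure_display} {T : measurableType d}
    {V : finType} (mu : {finite_measure set T -> \bar R}) (Y : T -> V) (F : V -> R)
    (D : set T) :
  measurable D -> (forall v, measurable (Y @^-1` [set v])) -> (forall v, 0 <= F v) ->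
  (\int[mu]_(t in D) (F (Y t))%:E =
   (\sum_v F v * fine (mu (Y @^-1` [set v] `&` D)))%:E)%E.
Proof.
move=> mD mY F0.
have FYE t : F (Y t) = \sum_v F v * \1_(Y @^-1` [set v]) t.
  rewrite (bigD1 (Y t)) //= indicE mem_set // mulr1 big1 ?addr0 // => v vYt.
  by rewrite indicE memNset ?mulr0 //= => /esym/eqP; rewrite (negbTE vYt).
under eq_integral do rewrite FYE.
rewrite ge0_integral_sumZl //; last by move=> v; exact/measurable_funTS/measurable_indic.
transitivity (\sum_v (F v * fine (mu (Y @^-1` [set v] `&` D)))%:E)%E; last first.
  by rewrite sumEFin.
apply: eq_bigr => v _.
by rewrite integral_indic // EFinM fineK // fin_num_measure //; exact: measurableI.
Qed.

Definition box_site {N M : nat} (p : 'I_N * 'I_M) : nat * nat := (p.1.+1, p.2.+1).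

Section renewal.
Context {R : realType} {d : measure_display} {T : measurableType d}.
Variable xi : nat -> T -> nat * nat.
Hypothesis mxi : forall k x, measurable (xi k @^-1` [set x]).

Lemma renewal_pointS k t : renewal_point xi k.+1 t =
  ((renewal_point xi k t).1 + (xi k t).1, (renewal_point xi k t).2 + (xi k t).2)%N.
Proof. by rewrite /renewal_point !big_ord_recr. Qed.

Lemma measurable_renewal_point k q : measurable (renewal_point xi k @^-1` [set q]).
Proof.
elim: k q => [|k IH] q.
  have -> : renewal_point xi 0 = cst (0, 0)%N.
    by apply/funext => t; rewrite /renewal_point !big_ord0.
  by rewrite preimage_cst; case: ifP.
have -> : renewal_point xi k.+1 @^-1` [set q] =
    \bigcup_a \bigcup_b (if ((a <= q.1) && (b <= q.2))%N then
      renewal_point xi k @^-1` [set (a, b)] `&` xi k @^-1` [set (q.1 - a, q.2 - b)%N]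
    else set0).
  apply/seteqP; split => t /=.
    rewrite renewal_pointS => tq; exists (renewal_point xi k t).1 => //.
    exists (renewal_point xi k t).2 => //; rewrite -tq /= !leq_addr /= !addKn.
    by split => //; case: (xi k t).
  case=> a _ [b _]; case: ifP => // /andP[aq bq] [rpk xik].
  by rewrite renewal_pointS rpk xik /= !subnKC //; case: q {rpk xik} aq bq.
apply: bigcupT_measurable => a; apply: bigcupT_measurable => b.
by case: ifP => // _; apply: measurableI.
Qed.

Lemma measurable_renewal_set_mem q : measurable [set t | renewal_set xi t q].
Proof.
have -> : [set t | renewal_set xi t q] = \bigcup_k renewal_point xi k @^-1` [set q].
  by apply/seteqP; split => t [k _ tq]; exists k.
by apply: bigcupT_measurable => k; exact: measurable_renewal_point.
Qed.

Variables N M : nat.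

Definition box_trace t : {set 'I_N * 'I_M} :=
  [set p | box_site p \in renewal_set xi t].

Lemma measurable_box_trace S : measurable (box_trace @^-1` [set S]).
Proof.
have -> : box_trace @^-1` [set S] = \bigcap_(p in [set` enum [set: 'I_N * 'I_M]])
    (if p \in S then [set t | renewal_set xi t (box_site p)]
     else ~` [set t | renewal_set xi t (box_site p)]).
  apply/seteqP; split => t /=.
    move=> <- p _; rewrite inE; case: ifP => [tp|/negbT/negP tp tpt].
      exact: set_mem tp.
    exact/tp/mem_set.
  move=> Ht; apply/setP => p; rewrite inE.
  have := Ht p; rewrite /= mem_enum in_setT => /(_ erefl).
  by case: ifP => _ tp; [rewrite mem_set | rewrite memNset].
rewrite bigcap_seq; apply: bigsetI_measurable => p _.
by case: ifP => _; [|apply: measurableC]; exact: measurable_renewal_set_mem.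
Qed.

Lemma energy_box_trace (o : nat -> nat -> R) beta h t :
  energy o beta h N M (renewal_set xi t) =
  \sum_(p in box_trace t) (beta * o (box_site p).1 (box_site p).2 + h).
Proof.
rewrite /energy big_add1 big_mkord; under eq_bigr do rewrite big_add1 big_mkord.
rewrite pair_big [RHS]big_mkcond /=; apply: eq_bigr => p _.
by rewrite indicE inE; case: (_ \in _); rewrite ?mulr1 ?mulr0.
Qed.

End renewal.

Section partition_function.
Context {R : realType} {d : measure_display} {T : measurableType d}.
Variables (Ptau : probability T R) (xi : nat -> T -> nat * nat).
Hypothesis mxi : forall k x, measurable (xi k @^-1` [set x]).

(* Zfree is Zfree_in setT and Pfree of A is Zfree_in (renewal_set xi @^-1` A)
   divided by Zfree, both up to conversion. *)
Definition Zfree_in (D : set T) (o : nat -> nat -> R) (beta h : R) (N M : nat) : R :=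
  fine (\int[Ptau]_(t in D) (expR (energy o beta h N M (renewal_set xi t)))%:E).

Lemma Zfree_in_ge0 D o beta h N M : 0 <= Zfree_in D o beta h N M.
Proof. by apply: fine_ge0; apply: integral_ge0 => t _; rewrite lee_fin expR_ge0. Qed.

Lemma Zfree_inE D o beta h N M : measurable D ->
  Zfree_in D o beta h N M =
  \sum_(S : {set 'I_N * 'I_M})
    expR (\sum_(p in S) (beta * o (box_site p).1 (box_site p).2 + h)) *
    fine (Ptau (box_trace xi N M @^-1` [set S] `&` D)).
Proof.
move=> mD; rewrite /Zfree_in; under eq_integral do rewrite energy_box_trace.
rewrite (integral_finite_valued _ _
  (fun S : {set 'I_N * 'I_M} => expR (\sum_(p in S) (beta * o (box_site p).1 (box_site p).2 + h)))) //.
exact: measurable_box_trace.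
Qed.

Lemma sum_prob_box_trace D N M : measurable D ->
  \sum_(S : {set 'I_N * 'I_M}) fine (Ptau (box_trace xi N M @^-1` [set S] `&` D)) =
  fine (Ptau D).
Proof.
move=> mD; have := integral_finite_valued Ptau (box_trace xi N M) (fun=> 1) D mD
  (measurable_box_trace xi mxi N M) (fun=> ler01).
rewrite integral_cst // mul1e => ->/=.
by under [RHS]eq_bigr do rewrite mul1r.
Qed.

End partition_function.

Section annealed_partition_function.
Context {R : realType} {d d' : measure_display}.
Context {T : measurableType d} {Om : measurableType d'}.
Variables (Ptau : probability T R) (xi : nat -> T -> nat * nat).
Hypothesis mxi : forall k x, measurable (xi k @^-1` [set x]).
Variables (P : probability Om R) (om : nat -> nat -> Om -> R).
Hypothesis mom : forall n m, measurable_fun setT (om n m).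
Hypothesis om_indep : forall (s : seq (nat * nat)) (B : nat * nat -> set R),
  uniq s -> all pos2 s -> (forall i, measurable (B i)) ->
  P (\bigcap_(i in [set` s]) om i.1 i.2 @^-1` B i) =
  (\prod_(i <- s) P (om i.1 i.2 @^-1` B i))%E.
Hypothesis om_law : forall n m n' m' (B : set R), pos2 (n, m) -> pos2 (n', m') ->
  measurable B -> P (om n m @^-1` B) = P (om n' m' @^-1` B).
Hypothesis om_expR : forall n m b, pos2 (n, m) ->
  P.-integrable setT (fun w => (expR (b * om n m w))%:E).
Variables (beta : R) (N M : nat).

Let Z D w := Zfree_in Ptau xi D (fun n m => om n m w) beta (hca P om beta) N M.

Let weight (S : {set 'I_N * 'I_M}) w :=
  expR (\sum_(p in S) (beta * om (box_site p).1 (box_site p).2 w + hca P om beta)).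

Let measurable_weight S : measurable_fun setT (weight S).
Proof.
apply: measurableT_comp; first exact: measurable_expR.
rewrite (_ : (fun w => _) = fun w => \sum_(p <- enum S)
  (beta * om (box_site p).1 (box_site p).2 w + hca P om beta)).
  apply: measurable_sum => p; apply: measurable_funD => //.
  exact: measurable_funM.
by apply/funext => w; rewrite big_enum.
Qed.

Let integral_weight S : (\int[P]_w (weight S w)%:E = 1)%E.
Proof.
rewrite -(integral_prod_expR_hca P om mom om_law om_expR om_indep beta
  [seq box_site p | p <- enum S]).
- by apply: eq_integral => w _; rewrite /weight expR_sum big_map big_enum.
- rewrite map_inj_uniq ?enum_uniq // => -[a b] [a' b'] /= [].
  by move=> /val_inj -> /val_inj ->.
- by apply/allP => q /mapP[p _ ->].
Qed.

Let ZE D : measurable D -> Z D = fun w => \sum_(S : {set 'I_N * 'I_M})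
  fine (Ptau (box_trace xi N M @^-1` [set S] `&` D)) * weight S w.
Proof.
by move=> mD; apply/funext => w; rewrite /Z Zfree_inE //; under eq_bigr do rewrite mulrC.
Qed.

Lemma measurable_Zfree_in D : measurable D -> measurable_fun setT (Z D).
Proof.
by move=> mD; rewrite ZE //; apply: measurable_sum => S; apply: measurable_funM.
Qed.

Lemma integral_Zfree_in D : measurable D ->
  (\int[P]_w (Z D w)%:E = (fine (Ptau D))%:E)%E.
Proof.
move=> mD; rewrite ZE // ge0_integral_sumZl //; last 2 first.
- by move=> S; apply: fine_ge0; exact: measure_ge0.
- by move=> S w _; exact: expR_ge0.
under eq_bigr do rewrite integral_weight mule1.
by rewrite sumEFin sum_prob_box_trace.
Qed.

End annealed_partition_function.

Section tail_bounds.
Context {R : realType} {d : measure_display} {Om : measurableType d}.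
Variable P : probability Om R.

Let measurable_lt (f g : Om -> R) : measurable_fun setT f -> measurable_fun setT g ->
  measurable [set x | f x < g x].
Proof.
by move=> mf mg; rewrite -(setTI [set x | _]); exact: measurable_fun_ltr.
Qed.

Lemma integral_scale_indic (A : set Om) (a : R) : measurable A -> 0 <= a ->
  (\int[P]_w (a * \1_A w)%:E = a%:E * P A)%E.
Proof.
move=> mA a0; under eq_integral do rewrite EFinM.
rewrite ge0_integralZl ?lee_fin ?integral_indic ?setIT //.
exact/measurable_EFinP/measurable_indic.
Qed.

(* Pointwise Z <= 1/2 + c' 1_{Z > 1/2} + Z 1_{Z > c} with c' = |c| + 1; integrate. *)
Lemma prob_gt_half_ge (Z : Om -> R) (c : R) :
  measurable_fun setT Z -> (forall w, 0 <= Z w) ->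
  (\int[P]_w (Z w)%:E = 1)%E ->
  (\int[P]_(w in [set w | (c < `|Z w|)%R]) (`|Z w|)%:E <= (1 / 4)%:E)%E ->
  ((1 / (4 * (`|c| + 1)))%:E <= P [set w | (1 / 2 < Z w)%R])%E.
Proof.
move=> mZ Z0 EZ tail.
set c' := `|c| + 1; set G := [set w | 1 / 2 < Z w]; set F := [set w | c < Z w].
have c'0 : 0 < c' by rewrite ltr_pwDr.
have cc' : c <= c' by rewrite (le_trans (ler_norm c)) // lerDl.
have mG : measurable G by apply: measurable_lt => //; exact: measurable_cst.
have mF : measurable F by apply: measurable_lt => //; exact: measurable_cst.
have tailF : (\int[P]_w (Z w * \1_F w)%:E <= (1 / 4)%:E)%E.
  have FE : [set w | c < `|Z w|] = F by apply/seteqP; split => w /=; rewrite ger0_norm.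
  apply: le_trans tail; rewrite FE [leRHS]integral_mkcond le_eqVlt; apply/orP; left.
  apply/eqP/eq_integral => w _; rewrite patchE indicE ger0_norm //.
  by case: ifP; rewrite ?mulr1 ?mulr0.
have split_Z w : Z w <= 1 / 2 + (c' * \1_G w + Z w * \1_F w).
  rewrite !indicE; case: (boolP (w \in G)) => wG; case: (boolP (w \in F)) => wF;
    rewrite ?mulr1 ?mulr0 ?addr0 ?add0r; try lra.
  - by move: wF; rewrite notin_setE /F /= => /negP; rewrite -leNgt => wF; lra.
  - by move: wG; rewrite notin_setE /G /= => /negP; rewrite -leNgt.
have mI1 : measurable_fun setT (fun w => (c' * \1_G w)%:E).
  exact/measurable_EFinP/measurable_funM/measurable_indic.
have mI2 : measurable_fun setT (fun w => (Z w * \1_F w)%:E).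
  exact/measurable_EFinP/measurable_funM/measurable_indic.
have I10 w : (0 <= (c' * \1_G w)%:E)%E by rewrite lee_fin mulr_ge0 ?indicE ?ler0n ?ltW.
have I20 w : (0 <= (Z w * \1_F w)%:E)%E by rewrite lee_fin mulr_ge0 ?indicE ?ler0n.
have E1 : (\int[P]_w ((1 / 2)%:E + ((c' * \1_G w)%:E + (Z w * \1_F w)%:E)) =
    (1 / 2)%:E + (c'%:E * P G + \int[P]_w (Z w * \1_F w)%:E))%E.
  rewrite ge0_integralD //; last 2 first.
  - by move=> w _; rewrite adde_ge0.
  - exact: emeasurable_funD.
  rewrite ge0_integralD // integral_cst // integral_scale_indic ?ltW //.
  by congr (_ + _)%E; rewrite -[RHS]mule1 -(probability_setT P).
have : (1 <= (1 / 2)%:E + (c'%:E * P G + \int[P]_w (Z w * \1_F w)%:E))%E.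
  rewrite -E1 -EZ; apply: ge0_le_integral => //.
  - by move=> w _; rewrite lee_fin.
  - exact/measurable_EFinP.
  - by apply: emeasurable_funD => //; exact: emeasurable_funD.
  - by move=> w _; rewrite -!EFinD lee_fin.
have J_fin : (\int[P]_w (Z w * \1_F w)%:E)%E \is a fin_num.
  by rewrite ge0_fin_numE ?(le_lt_trans tailF) ?ltry // integral_ge0.
move: tailF; rewrite -(fineK J_fin) -[P G]fineK ?fin_num_measure //.
rewrite -EFinM -!EFinD !lee_fin => tailF ineq.
by rewrite ler_pdivrMr ?mulr_gt0 //; nra.
Qed.

Lemma prob_ratio_le_half_ge (Z W : Om -> R) (p a : R) :
  measurable_fun setT Z -> measurable_fun setT W -> (forall w, 0 <= W w) ->
  (p%:E <= P [set w | (1 / 2 < Z w)%R])%E ->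
  (\int[P]_w (W w)%:E = a%:E)%E ->
  ((p - 4 * a)%:E <= P [set w | (W w / Z w <= 1 / 2)%R /\ (1 / 2 < Z w)%R])%E.
Proof.
move=> mZ mW W0 pG EW.
set G := [set w | (1 / 2 < Z w)%R].
set E := [set w | (W w / Z w <= 1 / 2)%R /\ (1 / 2 < Z w)%R].
set H := setT `&` [set w | ((1 / 4)%:E <= `|(W w)%:E|)%E].
have mG : measurable G by apply: measurable_lt => //; exact: measurable_cst.
have mH : measurable H.
  by apply: measurable_lee => //; apply: measurableT_comp => //; exact/measurable_EFinP.
have EE : E = G `&` [set w | W w * 2 <= Z w].
  apply/seteqP; split => w /=.
    case=> ratio Zw; split => //.
    by move: ratio; rewrite ler_pdivrMr ?(lt_trans _ Zw) //; lra.
  by case=> Zw W2; split => //; rewrite ler_pdivrMr ?(lt_trans _ Zw) //; lra.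
have mE : measurable E.
  rewrite EE; apply: measurableI => //; rewrite -(setTI [set w | _]).
  by apply: measurable_fun_ler => //; exact: measurable_funM.
have markovH : ((1 / 4)%:E * P H <= a%:E)%E.
  rewrite -EW; under eq_integral do rewrite -[X in X%:E]ger0_norm //.
  by apply: le_integral_abse => //; exact/measurable_EFinP.
have GEH : (P G <= P E + P H)%E.
  apply: le_trans (measureU2 _ mE mH); apply: le_measure; rewrite ?inE //.
    exact: measurableU.
  move=> w Gw; have [Wsmall|Wlarge] := ltP (W w) (1 / 4).
    by left; rewrite EE; split => //=; rewrite /G /= in Gw; lra.
  by right; split => //=; rewrite ger0_norm // lee_fin.
move: pG markovH GEH; rewrite -[P G]fineK ?fin_num_measure // -[P E]fineK ?fin_num_measure //.
rewrite -[P H]fineK ?fin_num_measure // -EFinM -EFinD !lee_fin => pG markovH GEH.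
lra.
Qed.

End tail_bounds.

Theorem proposition3p1
  (R : realType)
  (* renewal process tau, through its i.i.d. increments xi_k on (T, Ptau) *)
  (alpha : R) (L : R -> R)
  (d2 : measure_display) (T : measurableType d2) (Ptau : probability T R)
  (xi : nat -> T -> nat * nat)
  (* disorder omega on (Om, P) *)
  (d1 : measure_display) (Om : measurableType d1) (P : probability Om R)
  (om : nat -> nat -> Om -> R) :
  0 <= alpha ->
  slowly_varying L ->
  (\sum_(1 <= n <oo) \sum_(1 <= m <oo) (Kfun L alpha (n + m))%:E = 1)%E ->
  (forall k x, measurable (xi k @^-1` [set x])) ->
  (forall k n m, (0 < n)%N -> (0 < m)%N ->
     Ptau (xi k @^-1` [set (n, m)]) = (Kfun L alpha (n + m))%:E) ->
  (forall (k : nat) (x : nat -> nat * nat),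
     Ptau (\bigcap_(i in `I_k) xi i @^-1` [set x i])
     = (\prod_(i < k) Ptau (xi i @^-1` [set x i]))%E) ->
  (forall n m, measurable_fun setT (om n m)) ->
  (forall (s : seq (nat * nat)) (B : nat * nat -> set R),
     uniq s -> all pos2 s -> (forall i, measurable (B i)) ->
     P (\bigcap_(i in [set` s]) om i.1 i.2 @^-1` B i)
     = (\prod_(i <- s) P (om i.1 i.2 @^-1` B i))%E) ->
  (forall n m n' m' (B : set R), pos2 (n, m) -> pos2 (n', m') -> measurable B ->
     P (om n m @^-1` B) = P (om n' m' @^-1` B)) ->
  (forall n m, pos2 (n, m) -> (\int[P]_w (om n m w)%:E = 0)%E) ->
  (forall n m, pos2 (n, m) -> (\int[P]_w (om n m w ^+ 2)%:E = 1)%E) ->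
  (forall n m b, pos2 (n, m) ->
     P.-integrable setT (fun w => (expR (b * om n m w))%:E)) ->
  forall (beta : R) (M : nat -> nat),
  0 < beta ->
  (forall N, (0 < N)%N -> (0 < M N)%N) ->
  unif_integrable P
    (fun N w => Zfree Ptau xi (fun n m => om n m w) beta (hca P om beta) N (M N)) ->
  exists zeta : R, 0 < zeta /\
    forall A : nat -> set (set (nat * nat)),
      (forall N, measurable (renewal_set xi @^-1` A N)) ->
      (fun N => Ptau (renewal_set xi @^-1` A N)) @ \oo --> 0%E ->
      exists N0 : nat, (0 < N0)%N /\
        forall N, (N0 <= N)%N ->
          let E := [set w | Pfree Ptau xi (fun n m => om n m w) beta (hca P om beta)
                        N (M N) (A N) <= 1 / 2
                      /\ 1 / 2 < Zfree Ptau xi (fun n m => om n m w) beta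
                                   (hca P om beta) N (M N)] in
          (zeta%:E <= P E)%E.
Proof.
move=> _ _ _ mxi _ _ mom om_indep om_law _ _ om_expR beta M _ _ UI.
have [c tail] := UI (1 / 4) ltac:(lra).
set c' := `|c| + 1; have c'_gt0 : 0 < c' by rewrite ltr_pwDr.
exists (1 / (8 * c')); split=> [|A mA PA0]; first by rewrite divr_gt0 ?mulr_gt0.
have Zfree_mass N := integral_Zfree_in Ptau xi mxi P om mom om_indep om_law om_expR
  beta N (M N).
have Zfree_meas N := measurable_Zfree_in Ptau xi mxi P om mom beta N (M N).
have /cvgrPdist_le/(_ (1 / (32 * c'))) : fine (Ptau (renewal_set xi @^-1` A n)) @[n --> \oo] --> 0.
  by move/fine_cvgP : PA0 => [].
case=> [|N1 _ smallA]; first by rewrite divr_gt0 ?mulr_gt0.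
exists (maxn 1 N1); split => [|N]; first by rewrite leq_max.
rewrite geq_max => /andP[N_gt0 N1N] /=.
pose D := renewal_set xi @^-1` A N.
pose Z w := Zfree_in Ptau xi setT (fun n m => om n m w) beta (hca P om beta) N (M N).
pose W w := Zfree_in Ptau xi D (fun n m => om n m w) beta (hca P om beta) N (M N).
have EZ : (\int[P]_w (Z w)%:E = 1)%E by rewrite Zfree_mass // probability_setT.
have pG := prob_gt_half_ge P Z c (Zfree_meas N _ measurableT) (fun=> Zfree_in_ge0 _ _ _ _ _ _ _ _)
  EZ (tail N N_gt0).
apply: le_trans (prob_ratio_le_half_ge P Z W _ _ (Zfree_meas N _ measurableT)
  (Zfree_meas N _ (mA N)) (fun=> Zfree_in_ge0 _ _ _ _ _ _ _ _) pG (Zfree_mass N _ (mA N))).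
have := smallA N N1N; rewrite sub0r normrN ger0_norm; last first.
  by apply: fine_ge0; exact: measure_ge0.
have -> : 1 / (8 * c') = 4 * (1 / (32 * c')) by field; rewrite gt_eqF.
have -> : 1 / (4 * c') = 8 * (1 / (32 * c')) by field; rewrite gt_eqF.
rewrite lee_fin; lra.
Qed.
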